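(* Let $R\in\mathbb R$ and let $f:[0,R)\to\mathbb R$ be continuously differentiable and satisfy (h1) $f(0)>0$, $f'(0)=-1$; (h2) $f'$ is strictly increasing and convex; (h3) $f(t)<0$ for some $t\in(0,R)$. Let $e_f(v,t):=f(v)-[f(t)+f'(t)(v-t)]$ for $t,v\in[0,R)$. If $0\le b\le t$, $0\le a\le s$ and $t+s<R$, then \[e_f(a+b,b)\le e_f(t+s,t),\] and, if $s\neq0$, \[e_f(a+b,b)\le\frac12\,\frac{f'(t+s)-f'(t)}{s}\,a^2.\] *)

From Stdlib Require Import Reals Lra.
Open Scope R_scope.

Definition deriv_on (f df : R -> R) (Rad : R) : Prop :=
  forall t, 0 <= t < Rad ->
    forall eps, 0 < eps -> exists delta, 0 < delta /\
      forall v, 0 <= v < Rad -> Rabs (v - t) < delta ->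
        Rabs (f v - f t - df t * (v - t)) <= eps * Rabs (v - t).

Definition cont_on (g : R -> R) (Rad : R) : Prop :=
  forall t, 0 <= t < Rad ->
    forall eps, 0 < eps -> exists delta, 0 < delta /\
      forall v, 0 <= v < Rad -> Rabs (v - t) < delta -> Rabs (g v - g t) < eps.

Definition strict_incr_on (g : R -> R) (Rad : R) : Prop :=
  forall x y, 0 <= x < Rad -> 0 <= y < Rad -> x < y -> g x < g y.

Definition convex_on (g : R -> R) (Rad : R) : Prop :=
  forall x y l, 0 <= x < Rad -> 0 <= y < Rad -> 0 <= l <= 1 ->
    g (l * x + (1 - l) * y) <= l * g x + (1 - l) * g y.

Definition ef (f df : R -> R) (v t : R) : R := f v - (f t + df t * (v - t)).

(* Extend f to the left of 0 by its tangent line at 0; the extension is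
   differentiable on (-oo, Rad) with derivative df (frozen at df 0 left of 0), so
   the mean value theorem applies on closed intervals touching 0.  The derivative
   of v |-> e_f(v, b) is f'(v) - f'(b); convexity of f' makes the increments
   f'(b + u) - f'(b) grow with b and lie below the chord of f' over [t, t + s],
   and integrating these comparisons (via the MVT) gives both bounds. *)
From Stdlib Require Import Reals Lra.
Open Scope R_scope.

Lemma increment_le_of_derive_le (g h g' h' : R -> R) (p q : R) :
  p <= q ->
  (forall c, p <= c <= q -> derivable_pt_lim g c (g' c)) ->
  (forall c, p <= c <= q -> derivable_pt_lim h c (h' c)) ->
  (forall c, p <= c <= q -> g' c <= h' c) ->
  g q - g p <= h q - h p.
Proof.
intros [Hpq | <-] Hg Hh Hle; [|lra].
destruct (MVT_cor2 (fun x => g x - h x) (fun x => g' x - h' x) p q Hpq)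
  as [c [Hmvt Hc]].
- intros c Hc; apply (derivable_pt_lim_minus g h); auto.
- assert (g' c <= h' c) by (apply Hle; lra). nra.
Qed.

Lemma derivable_pt_lim_of_estimate (F : R -> R) (x l : R) :
  (forall eps, 0 < eps -> exists delta, 0 < delta /\
     forall v, Rabs (v - x) < delta ->
       Rabs (F v - F x - l * (v - x)) <= eps * Rabs (v - x)) ->
  derivable_pt_lim F x l.
Proof.
intros Hest eps Heps.
destruct (Hest (eps / 2)) as [delta [Hdelta Hv]]; [lra|].
exists (mkposreal delta Hdelta); simpl; intros h Hh0 Hh.
assert (Habs : 0 < Rabs h) by (apply Rabs_pos_lt; auto).
specialize (Hv (x + h)); replace (x + h - x) with h in Hv by ring.
replace ((F (x + h) - F x) / h - l) with ((F (x + h) - F x - l * h) * / h)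
  by (field; auto).
rewrite Rabs_mult, Rabs_inv.
apply (Rmult_lt_reg_r (Rabs h)); auto.
rewrite Rmult_assoc, Rinv_l by lra.
specialize (Hv Hh); nra.
Qed.

Lemma derivable_pt_lim_ef_shift (F DF : R -> R) (b y : R) :
  derivable_pt_lim F (b + y) (DF (b + y)) ->
  derivable_pt_lim (fun z => ef F DF (b + z) b) y (DF (b + y) - DF b).
Proof.
intros HF eps Heps; destruct (HF eps Heps) as [delta Hdelta].
exists delta; intros h Hh0 Hh.
replace ((ef F DF (b + (y + h)) b - ef F DF (b + y) b) / h - (DF (b + y) - DF b))
  with ((F (b + y + h) - F (b + y)) / h - DF (b + y))
  by (unfold ef; replace (b + (y + h)) with (b + y + h) by ring; field; auto).
auto.
Qed.

Lemma derivable_pt_lim_half_square (K y : R) :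
  derivable_pt_lim (fun z => 1 / 2 * K * z ^ 2) y (K * y).
Proof.
replace (K * y) with (1 / 2 * K * (INR 2 * y ^ Nat.pred 2)) by (simpl; field).
exact (derivable_pt_lim_scal (fun z => z ^ 2) _ y _ (derivable_pt_lim_pow y 2)).
Qed.

Section ConvexOn.

Variables (g : R -> R) (Rad : R).
Hypothesis g_convex : convex_on g Rad.

Lemma convex_on_increment_mono (b t u : R) :
  0 <= b <= t -> 0 <= u -> t + u < Rad -> g (b + u) - g b <= g (t + u) - g t.
Proof.
intros Hb Hu Htu.
destruct (Req_dec u 0) as [-> | Hu0]; [rewrite !Rplus_0_r; lra|].
(* b <= b + u, t <= t + u are mirror-image convex combinations of b and t + u. *)
set (l := (t - b) / (t + u - b)).
assert (Hl : l * (t + u - b) = t - b) by (unfold l; field; lra).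
clearbody l.
assert (0 <= l <= 1) by nra.
pose proof (g_convex b (t + u) l ltac:(lra) ltac:(lra) ltac:(lra)) as Hbu.
pose proof (g_convex b (t + u) (1 - l) ltac:(lra) ltac:(lra) ltac:(lra)) as Ht.
replace (l * b + (1 - l) * (t + u)) with (b + u) in Hbu by nra.
replace ((1 - l) * b + (1 - (1 - l)) * (t + u)) with t in Ht by nra.
lra.
Qed.

Lemma convex_on_below_chord (t s x : R) :
  0 <= t -> 0 < s -> 0 <= x <= s -> t + s < Rad ->
  g (t + x) - g t <= (g (t + s) - g t) / s * x.
Proof.
intros Ht Hs Hx Hts.
set (l := x / s).
assert (Hl : l * s = x) by (unfold l; field; lra).
clearbody l.
assert (0 <= l <= 1) by nra.
pose proof (g_convex (t + s) t l ltac:(lra) ltac:(lra) ltac:(lra)) as Hconv.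
replace (l * (t + s) + (1 - l) * t) with (t + x) in Hconv by nra.
replace ((g (t + s) - g t) / s * x) with (l * (g (t + s) - g t))
  by (rewrite <- Hl; field; lra).
lra.
Qed.

End ConvexOn.

Definition ext_tangent (f df : R -> R) (x : R) : R :=
  if Rle_dec 0 x then f x else f 0 + df 0 * x.

Definition ext_const (g : R -> R) (x : R) : R :=
  if Rle_dec 0 x then g x else g 0.

Lemma ext_tangent_nonneg (f df : R -> R) (x : R) :
  0 <= x -> ext_tangent f df x = f x.
Proof. unfold ext_tangent; destruct Rle_dec; lra. Qed.

Lemma ext_const_nonneg (g : R -> R) (x : R) : 0 <= x -> ext_const g x = g x.
Proof. unfold ext_const; destruct Rle_dec; lra. Qed.

Lemma ef_ext_tangent (f df : R -> R) (v t : R) :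
  0 <= v -> 0 <= t -> ef (ext_tangent f df) (ext_const df) v t = ef f df v t.
Proof.
intros Hv Ht; unfold ef.
rewrite !ext_tangent_nonneg, ext_const_nonneg by lra; reflexivity.
Qed.

Section TangentExtension.

Variables (f df : R -> R) (Rad : R).
Hypotheses (f_deriv : deriv_on f df Rad) (df_cont : cont_on df Rad).

Lemma derivable_pt_lim_ext_tangent (x : R) :
  x < Rad -> derivable_pt_lim (ext_tangent f df) x (ext_const df x).
Proof.
intros Hx; apply derivable_pt_lim_of_estimate; intros eps Heps.
unfold ext_tangent, ext_const; destruct (Rle_dec 0 x) as [Hx0 | Hx0].
- destruct (f_deriv x (conj Hx0 Hx) (eps / 2)) as [d1 [Hd1 Hf]]; [lra|].
  destruct (df_cont x (conj Hx0 Hx) (eps / 2)) as [d2 [Hd2 Hdf]]; [lra|].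
  exists (Rmin d1 (Rmin d2 (Rad - x))); split; [repeat apply Rmin_pos; lra|].
  intros v Hv.
  pose proof (Rmin_l d1 (Rmin d2 (Rad - x))).
  pose proof (Rmin_r d1 (Rmin d2 (Rad - x))).
  pose proof (Rmin_l d2 (Rad - x)); pose proof (Rmin_r d2 (Rad - x)).
  assert (Hvx : v < Rad) by (pose proof (Rle_abs (v - x)); lra).
  destruct (Rle_dec 0 v) as [Hv0 | Hv0].
  + assert (Hest : Rabs (f v - f x - df x * (v - x)) <= eps / 2 * Rabs (v - x))
      by (apply Hf; auto; lra).
    pose proof (Rabs_pos (v - x)); nra.
  + (* Left of 0 the error splits into the tangent error at 0 and a
       continuity term, with |0 - x| + |v| = |v - x|. *)
    rewrite (Rabs_left1 (v - x)) in Hv |- * by lra.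
    assert (Htan : Rabs (f 0 - f x - df x * (0 - x)) <= eps / 2 * Rabs (0 - x))
      by (apply Hf; [lra | rewrite Rabs_left1; lra]).
    assert (Hslope : Rabs (df 0 - df x) < eps / 2)
      by (apply Hdf; [lra | rewrite Rabs_left1; lra]).
    rewrite (Rabs_left1 (0 - x)) in Htan by lra.
    replace (f 0 + df 0 * v - f x - df x * (v - x))
      with ((f 0 - f x - df x * (0 - x)) + (df 0 - df x) * v) by ring.
    eapply Rle_trans; [apply Rabs_triang|].
    rewrite Rabs_mult, (Rabs_left v) by lra.
    assert (Rabs (df 0 - df x) * - v <= eps / 2 * - v)
      by (apply Rmult_le_compat_r; lra).
    nra.
- exists (- x); split; [lra|]; intros v Hv.
  destruct (Rle_dec 0 v); [rewrite Rabs_right in Hv; lra|].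
  replace (f 0 + df 0 * v - (f 0 + df 0 * x) - df 0 * (v - x)) with 0 by ring.
  rewrite Rabs_R0; apply Rmult_le_pos; [lra | apply Rabs_pos].
Qed.

Lemma derivable_pt_lim_ef_ext_tangent (b y : R) :
  0 <= b -> 0 <= b + y -> b + y < Rad ->
  derivable_pt_lim (fun z => ef (ext_tangent f df) (ext_const df) (b + z) b) y
    (df (b + y) - df b).
Proof.
intros Hb Hby HbyR.
rewrite <- (ext_const_nonneg df (b + y)), <- (ext_const_nonneg df b) by lra.
apply derivable_pt_lim_ef_shift, derivable_pt_lim_ext_tangent; exact HbyR.
Qed.

End TangentExtension.

Theorem lemma3p3 (Rad : R) (f df : R -> R)
  (Hd : deriv_on f df Rad) (Hc : cont_on df Rad)
  (h1a : f 0 > 0) (h1b : df 0 = -1)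
  (h2a : strict_incr_on df Rad) (h2b : convex_on df Rad)
  (h3 : exists t, 0 < t < Rad /\ f t < 0)
  (a b s t : R)
  (Hb : 0 <= b <= t) (Ha : 0 <= a <= s) (Hts : t + s < Rad) :
  ef f df (a + b) b <= ef f df (t + s) t /\
  (s <> 0 -> ef f df (a + b) b <= 1 / 2 * ((df (t + s) - df t) / s) * a ^ 2).
Proof.
set (e := fun x y => ef (ext_tangent f df) (ext_const df) (x + y) x).
assert (e_eq : forall x y, 0 <= x -> 0 <= y -> e x y = ef f df (x + y) x).
{ intros x y Hx Hy; apply ef_ext_tangent; lra. }
assert (e_zero : forall x, e x 0 = 0).
{ intros x; unfold e, ef; rewrite Rplus_0_r; ring. }
assert (e_deriv : forall x y, 0 <= x -> 0 <= y -> x + y < Rad ->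
  derivable_pt_lim (e x) y (df (x + y) - df x)).
{ intros x y Hx Hy Hxy; apply (derivable_pt_lim_ef_ext_tangent f df Rad); auto; lra. }
assert (Hba : e b a - e b 0 <= e t a - e t 0).
{ apply (increment_le_of_derive_le (e b) (e t) (fun y => df (b + y) - df b)
           (fun y => df (t + y) - df t)); try (intros; apply e_deriv); try lra.
  intros y Hy; pose proof (convex_on_increment_mono df Rad h2b b t y); lra. }
rewrite (Rplus_comm a b), <- e_eq by lra.
rewrite !e_zero in Hba.
split.
- assert (Hta : 0 - 0 <= e t s - e t a).
  { apply (increment_le_of_derive_le (fun _ => 0) (e t) (fun _ => 0)
             (fun y => df (t + y) - df t));
      try (intros; apply e_deriv); try (intros; apply derivable_pt_lim_const); try lra.
    intros y Hy; destruct (Req_dec y 0) as [-> | Hy0]; [rewrite Rplus_0_r; lra|].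
    pose proof (h2a t (t + y)); lra. }
  rewrite <- e_eq by lra; lra.
- intros Hs0.
  assert (Hs : 0 < s) by (apply Rnot_le_lt; intro; apply Hs0; lra).
  set (K := (df (t + s) - df t) / s).
  assert (Hquad : e b a - e b 0 <= 1 / 2 * K * a ^ 2 - 1 / 2 * K * 0 ^ 2).
  { apply (increment_le_of_derive_le (e b) (fun y => 1 / 2 * K * y ^ 2)
             (fun y => df (b + y) - df b) (fun y => K * y));
      try (intros; apply e_deriv); try (intros; apply derivable_pt_lim_half_square); try lra.
    intros y Hy.
    pose proof (convex_on_increment_mono df Rad h2b b t y).
    pose proof (convex_on_below_chord df Rad h2b t s y); unfold K; lra. }
  rewrite e_zero in Hquad; lra.
Qed.
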